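(* Let $X$ be a transient random walk on $\mathbf{Z}^d$ and let $U(A):=\sum_{x\in A\cap\mathbf{Z}^d}g(0,x)$ for $A\subseteq\mathbf{R}^d$. Then $U(\mathcal{V}_{n+1})\le 4^dU(\mathcal{V}_n)$ for all integers $n\ge0$.
   Context: A random walk on $\mathbf{Z}^d$ is $X_n=X_0+\xi_1+\cdots+\xi_n$ with $\xi_1,\xi_2,\dots$ i.i.d. $\mathbf{Z}^d$-valued; $P^a$ denotes its law when $X_0=a$. Its Green function is $g(a,x):=\sum_{n\ge0}P^a\{X_n=x\}$, and transience means $g$ is finite. For $k\ge0$, $\mathcal{V}_k:=[-2^k,2^k)^d$. *)

From Stdlib Require Import Reals ZArith List Classical ClassicalEpsilon.
Import ListNotations.
Open Scope R_scope.

Definition lsum {T : Type} (f : T -> R) (l : list T) : R :=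
  fold_right (fun x acc => f x + acc) 0 l.

Definition partial_sums {T : Type} (A : T -> Prop) (f : T -> R) : R -> Prop :=
  fun s => exists l : list T, NoDup l /\ Forall A l /\ s = lsum f l.

Lemma partial_sums_nonempty {T : Type} (A : T -> Prop) (f : T -> R) :
  exists s, partial_sums A f s.
Proof. exists 0; exists nil; repeat split; constructor. Qed.

Definition summable {T : Type} (A : T -> Prop) (f : T -> R) : Prop :=
  bound (partial_sums A f).

(* Sum of a (nonnegative) family over a countable set A: the supremum of the
   finite partial sums; by convention 0 if these are unbounded (this case is
   excluded by the hypotheses wherever it matters). *)
Definition psum {T : Type} (A : T -> Prop) (f : T -> R) : R :=
  match excluded_middle_informative (summable A f) with
  | left H => proj1_sig (completeness _ H (partial_sums_nonempty A f))
  | right _ => 0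
  end.

Definition lattice (d : nat) (x : list Z) : Prop := length x = d.

Definition vsub (x y : list Z) : list Z :=
  map (fun ab => (fst ab - snd ab)%Z) (combine x y).

(* Law of the random walk with step distribution p (p y = P{xi_1 = y}):
   law p n a x = P^a{X_n = x}. *)
Fixpoint law (d : nat) (p : list Z -> R) (n : nat) (a x : list Z) : R :=
  match n with
  | O => if list_eq_dec Z.eq_dec x a then 1 else 0
  | S m => psum (lattice d) (fun y => law d p m a y * p (vsub x y))
  end.

Definition green (d : nat) (p : list Z -> R) (a x : list Z) : R :=
  psum (fun _ : nat => True) (fun n => law d p n a x).

Definition transient (d : nat) (p : list Z -> R) : Prop :=
  forall a x, lattice d a -> lattice d x ->
    summable (fun _ : nat => True) (fun n => law d p n a x).

(* The box V_k = [-2^k, 2^k)^d, as a subset of Z^d. *)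
Definition box (d k : nat) (x : list Z) : Prop :=
  lattice d x /\
  Forall (fun z => (- (2 ^ Z.of_nat k) <= z < 2 ^ Z.of_nat k)%Z) x.

Definition U (d : nat) (p : list Z -> R) (A : list Z -> Prop) : R :=
  psum (fun x => A x /\ lattice d x) (fun x => green d p (repeat 0%Z d) x).

Definition step_distribution (d : nat) (p : list Z -> R) : Prop :=
  (forall y, 0 <= p y) /\
  (forall y, p y <> 0 -> lattice d y) /\
  summable (lattice d) p /\ psum (lattice d) p = 1.

(* Maximum principle: for a finite set S, the expected number of visits to S
   from the origin, sum_(y in S) g(0,y), is at most its maximum over starting
   points z in S, sum_(y in S) g(0,y-z).  Truncate the count at time N and
   induct on N: from a point outside S the first step averages the truncated
   count over the neighbours.  Then cut V_(n+1) into 4^d cubes of side 2^n;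
   two points of one cube differ by a vector of V_n, so each cube contributes
   at most U(V_n). *)

From Stdlib Require Import Reals ZArith List.
From Stdlib Require Import Lra Lia ClassicalEpsilon.
Import ListNotations.
Open Scope R_scope.

Lemma lsum_cons {T} (f : T -> R) x l : lsum f (x :: l) = f x + lsum f l.
Proof. reflexivity. Qed.

Lemma lsum_map {T U} (f : U -> R) (g : T -> U) l :
  lsum f (map g l) = lsum (fun x => f (g x)) l.
Proof. induction l as [|x l IH]; simpl; rewrite ?IH; reflexivity. Qed.

Lemma lsum_ext_in {T} (f g : T -> R) l :
  (forall x, In x l -> f x = g x) -> lsum f l = lsum g l.
Proof.
  induction l as [|x l IH]; intros H; simpl; [reflexivity|].
  rewrite H by (simpl; auto). rewrite IH; auto. intros; apply H; simpl; auto.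
Qed.

Lemma lsum_le {T} (f g : T -> R) l :
  (forall x, In x l -> f x <= g x) -> lsum f l <= lsum g l.
Proof.
  induction l as [|x l IH]; intros H; simpl; [lra|].
  assert (f x <= g x) by (apply H; simpl; auto).
  assert (lsum f l <= lsum g l) by (apply IH; intros; apply H; simpl; auto).
  lra.
Qed.

Lemma lsum_nonneg {T} (f : T -> R) l :
  (forall x, In x l -> 0 <= f x) -> 0 <= lsum f l.
Proof.
  induction l as [|x l IH]; intros H; simpl; [lra|].
  assert (0 <= f x) by (apply H; simpl; auto).
  assert (0 <= lsum f l) by (apply IH; intros; apply H; simpl; auto).
  lra.
Qed.

Lemma lsum_plus {T} (f g : T -> R) l :
  lsum (fun x => f x + g x) l = lsum f l + lsum g l.
Proof. induction l as [|x l IH]; simpl; rewrite ?IH; lra. Qed.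

Lemma lsum_scal_l {T} (f : T -> R) c l :
  lsum (fun x => c * f x) l = c * lsum f l.
Proof. induction l as [|x l IH]; simpl; rewrite ?IH; lra. Qed.

Lemma lsum_scal_r {T} (f : T -> R) c l :
  lsum (fun x => f x * c) l = lsum f l * c.
Proof. induction l as [|x l IH]; simpl; rewrite ?IH; lra. Qed.

Lemma lsum_const {T} c (l : list T) : lsum (fun _ => c) l = INR (length l) * c.
Proof. induction l as [|x l IH]; simpl length; rewrite ?lsum_cons, ?IH, ?S_INR; simpl; lra. Qed.

Lemma lsum_swap {T U} (F : T -> U -> R) l1 l2 :
  lsum (fun x => lsum (F x) l2) l1 = lsum (fun y => lsum (fun x => F x y) l1) l2.
Proof.
  induction l1 as [|x l1 IH]; simpl.
  - rewrite lsum_const; lra.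
  - rewrite IH, <- lsum_plus. reflexivity.
Qed.

Lemma lsum_In_le {T} (f : T -> R) l x :
  In x l -> (forall y, In y l -> 0 <= f y) -> f x <= lsum f l.
Proof.
  induction l as [|a l IH]; intros Hx H; [destruct Hx|]. simpl.
  assert (0 <= f a) by (apply H; simpl; auto).
  assert (0 <= lsum f l) by (apply lsum_nonneg; intros; apply H; simpl; auto).
  destruct Hx as [<-|Hx]; [lra|].
  assert (f x <= lsum f l) by (apply IH; auto; intros; apply H; simpl; auto).
  lra.
Qed.

Section LsumIncl.
Variables (T : Type) (dec : forall x y : T, {x = y} + {x <> y}) (f : T -> R).
Hypothesis f_nonneg : forall x, 0 <= f x.

Lemma lsum_remove x l : In x l -> f x + lsum f (remove dec x l) <= lsum f l.
Proof.
  assert (Hle : forall l, lsum f (remove dec x l) <= lsum f l).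
  { induction l0 as [|a l0 IH]; simpl; [lra|].
    destruct (dec x a); simpl; pose proof (f_nonneg a); lra. }
  induction l as [|a l IH]; intros Hx; [destruct Hx|]. simpl.
  destruct (dec x a) as [<-|Hxa]; [pose proof (Hle l); lra|].
  destruct Hx as [->|Hx]; [congruence|]. simpl. specialize (IH Hx). lra.
Qed.

Lemma lsum_incl l1 l : NoDup l1 -> incl l1 l -> lsum f l1 <= lsum f l.
Proof.
  intros N; revert l; induction N as [|x l1 Hx N IH]; intros l I.
  - apply lsum_nonneg; auto.
  - assert (Hxl : In x l) by (apply I; simpl; auto).
    pose proof (lsum_remove x l Hxl).
    assert (lsum f l1 <= lsum f (remove dec x l)).
    { apply IH. intros y Hy. apply in_in_remove; [congruence|]. apply I; simpl; auto. }
    simpl; lra.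
Qed.

End LsumIncl.

Lemma lsum_le_sum_classes {T U} (decU : forall x y : U, {x = y} + {x <> y})
  (f : T -> R) (cls : T -> U) (l : list T) (C : list U) :
  (forall x, 0 <= f x) -> (forall x, In x l -> In (cls x) C) ->
  lsum f l <= lsum (fun c => lsum f (filter (fun y => if decU (cls y) c then true else false) l)) C.
Proof.
  intros Hf. induction l as [|x l IH]; intros HC.
  - apply lsum_nonneg. intros; apply lsum_nonneg; auto.
  - set (single c := if decU (cls x) c then f x else 0).
    assert (Hx : f x <= lsum single C).
    { replace (f x) with (single (cls x))
        by (unfold single; destruct (decU (cls x) (cls x)); congruence).
      apply lsum_In_le; [apply HC; simpl; auto|].
      intros c _; unfold single; destruct (decU (cls x) c); auto; lra. }
    assert (lsum f l <= lsum (fun c => lsum f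
              (filter (fun y => if decU (cls y) c then true else false) l)) C)
      by (apply IH; intros; apply HC; simpl; auto).
    rewrite lsum_cons, (lsum_ext_in _ (fun c => single c + lsum f
      (filter (fun y => if decU (cls y) c then true else false) l))), lsum_plus; [lra|].
    intros c _; unfold single; simpl filter. destruct (decU (cls x) c); simpl; lra.
Qed.

Lemma psum_le_of_bound {T} (A : T -> Prop) f M :
  (forall l, NoDup l -> Forall A l -> lsum f l <= M) -> summable A f /\ psum A f <= M.
Proof.
  intros H. assert (Hs : summable A f) by (exists M; intros s [l [? [? ->]]]; auto).
  split; auto. unfold psum.
  destruct (excluded_middle_informative (summable A f)) as [h|]; [|contradiction].
  destruct (completeness _ h _) as [s [Hub Hlub]]. apply Hlub.
  intros s' [l [? [? ->]]]; auto.
Qed.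

Lemma psum_ub {T} (A : T -> Prop) f l :
  summable A f -> NoDup l -> Forall A l -> lsum f l <= psum A f.
Proof.
  intros Hs Hn Hf. unfold psum.
  destruct (excluded_middle_informative (summable A f)) as [h|]; [|contradiction].
  destruct (completeness _ h _) as [s [Hub Hlub]]. apply Hub. exists l; auto.
Qed.

Lemma psum_nonneg {T} (A : T -> Prop) f : (forall x, 0 <= f x) -> 0 <= psum A f.
Proof.
  intros H. unfold psum.
  destruct (excluded_middle_informative (summable A f)) as [h|]; [|lra].
  destruct (completeness _ h _) as [s [Hub Hlub]]. apply Hub.
  exists nil; repeat split; constructor.
Qed.

Lemma summable_le {T} (A : T -> Prop) f g :
  (forall x, f x <= g x) -> summable A g -> summable A f.
Proof.
  intros H [m Hm]. exists m. intros s [l [? [? ->]]].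
  apply Rle_trans with (lsum g l); [apply lsum_le; auto|]. apply Hm; exists l; auto.
Qed.

Lemma psum_le {T} (A : T -> Prop) f g :
  (forall x, f x <= g x) -> summable A g -> psum A f <= psum A g.
Proof.
  intros H Hg. apply psum_le_of_bound. intros l Hl Hf.
  apply Rle_trans with (lsum g l); [apply lsum_le; auto | apply psum_ub; auto].
Qed.

Lemma psum_eq_of_partial_sums {T} (A : T -> Prop) f g :
  (forall s, partial_sums A f s <-> partial_sums A g s) -> psum A f = psum A g.
Proof.
  intros E. unfold psum.
  destruct (excluded_middle_informative (summable A f)) as [hf|hf];
  destruct (excluded_middle_informative (summable A g)) as [hg|hg].
  - destruct (completeness _ hf _) as [sf [Uf Lf]], (completeness _ hg _) as [sg [Ug Lg]].
    simpl. apply Rle_antisym.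
    + apply Lf. intros s Hs. apply Ug, E, Hs.
    + apply Lg. intros s Hs. apply Uf, E, Hs.
  - destruct hf as [m Hm]. exfalso; apply hg. exists m. intros s Hs; apply Hm, E, Hs.
  - destruct hg as [m Hm]. exfalso; apply hf. exists m. intros s Hs; apply Hm, E, Hs.
  - reflexivity.
Qed.

Lemma psum_ext_in {T} (A : T -> Prop) f g :
  (forall x, A x -> f x = g x) -> psum A f = psum A g.
Proof.
  intros H. apply psum_eq_of_partial_sums.
  assert (K : forall l, Forall A l -> lsum f l = lsum g l).
  { intros l Hl. rewrite Forall_forall in Hl. apply lsum_ext_in; auto. }
  intros s; split; intros [l [Hn [Hf ->]]]; exists l; rewrite K; auto.
Qed.

Lemma psum_reindex_invol {T} (A : T -> Prop) f (phi : T -> T) :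
  (forall x, A x -> A (phi x)) -> (forall x, A x -> phi (phi x) = x) ->
  psum A f = psum A (fun x => f (phi x)).
Proof.
  intros HA Hi.
  assert (Hnd : forall l, NoDup l -> Forall A l -> NoDup (map phi l)).
  { intros l Hn Hf. apply NoDup_map_NoDup_ForallPairs; auto. intros x y Hx Hy E.
    rewrite Forall_forall in Hf. rewrite <- (Hi x), <- (Hi y); auto; congruence. }
  assert (Hfa : forall l, Forall A l -> Forall A (map phi l)).
  { intros l Hf. apply Forall_map. eapply Forall_impl; [|exact Hf]. auto. }
  apply psum_eq_of_partial_sums; intros s; split; intros [l [Hn [Hf ->]]];
    exists (map phi l); repeat split; auto; rewrite lsum_map; auto.
  apply lsum_ext_in. intros x Hx. rewrite Forall_forall in Hf. rewrite Hi; auto.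
Qed.

Lemma psum_plus_ge {T} (dec : forall x y : T, {x = y} + {x <> y}) (A : T -> Prop) f g :
  (forall x, 0 <= f x) -> (forall x, 0 <= g x) -> summable A (fun x => f x + g x) ->
  psum A f + psum A g <= psum A (fun x => f x + g x).
Proof.
  intros Hf Hg Hs.
  enough (psum A f <= psum A (fun x => f x + g x) - psum A g) by lra.
  apply psum_le_of_bound. intros l1 N1 F1.
  enough (psum A g <= psum A (fun x => f x + g x) - lsum f l1) by lra.
  apply psum_le_of_bound. intros l2 N2 F2.
  set (L := nodup dec (l1 ++ l2)).
  assert (HL : forall l x, (In x l1 -> In x l) -> (In x l2 -> In x l) -> In x L -> In x l).
  { intros l x H1 H2 Hx. apply nodup_In, in_app_or in Hx. tauto. }
  assert (FL : Forall A L).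
  { rewrite Forall_forall in *. intros x Hx. apply nodup_In, in_app_or in Hx.
    destruct Hx; auto. }
  assert (lsum f l1 <= lsum f L)
    by (apply (lsum_incl _ dec); auto; intros x Hx; apply nodup_In, in_or_app; auto).
  assert (lsum g l2 <= lsum g L)
    by (apply (lsum_incl _ dec); auto; intros x Hx; apply nodup_In, in_or_app; auto).
  assert (lsum (fun x => f x + g x) L <= psum A (fun x => f x + g x))
    by (apply psum_ub; auto; apply NoDup_nodup).
  rewrite lsum_plus in *. lra.
Qed.

Lemma lsum_psum_le {T U} (dec : forall x y : T, {x = y} + {x <> y}) (A : T -> Prop)
  (F : U -> T -> R) (L : list U) :
  (forall i x, 0 <= F i x) -> summable A (fun x => lsum (fun i => F i x) L) ->
  lsum (fun i => psum A (F i)) L <= psum A (fun x => lsum (fun i => F i x) L).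
Proof.
  intros H. induction L as [|i L IH]; intros Hs.
  - apply psum_nonneg. intros; simpl; lra.
  - assert (Hs' : summable A (fun x => lsum (fun i => F i x) L)).
    { apply summable_le with (2 := Hs). intros x; simpl. specialize (H i x); lra. }
    specialize (IH Hs').
    pose proof (psum_plus_ge dec A (F i) (fun x => lsum (fun i => F i x) L) (H i)
      (fun x => lsum_nonneg _ _ (fun j _ => H j x)) Hs).
    simpl; lra.
Qed.

Definition vadd (x y : list Z) : list Z :=
  map (fun ab => (fst ab + snd ab)%Z) (combine x y).

Lemma vsub_cons a x b y : vsub (a :: x) (b :: y) = (a - b)%Z :: vsub x y.
Proof. reflexivity. Qed.

Lemma vadd_cons a x b y : vadd (a :: x) (b :: y) = (a + b)%Z :: vadd x y.
Proof. reflexivity. Qed.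

Lemma vsub_length x y : length x = length y -> length (vsub x y) = length x.
Proof.
  revert y; induction x; intros [|b y] H; simpl in H; try discriminate; auto.
  rewrite vsub_cons; simpl; auto.
Qed.

Lemma vadd_length x y : length x = length y -> length (vadd x y) = length x.
Proof.
  revert y; induction x; intros [|b y] H; simpl in H; try discriminate; auto.
  rewrite vadd_cons; simpl; auto.
Qed.

Lemma vsubK x u : length x = length u -> vsub x (vsub x u) = u.
Proof.
  revert u; induction x; intros [|b u] H; simpl in H; try discriminate; auto.
  rewrite !vsub_cons, IHx by auto. f_equal; lia.
Qed.

Lemma vsub_vadd y c u : length y = length c -> length c = length u ->
  vsub (vsub y c) u = vsub y (vadd c u).
Proof.
  revert c u; induction y; intros [|b c] [|e u] H1 H2; simpl in H1, H2; try discriminate; auto.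
  rewrite vadd_cons, !vsub_cons, IHy by lia. f_equal; lia.
Qed.

Lemma vsub0 y : vsub y (repeat 0%Z (length y)) = y.
Proof. induction y; auto. simpl. rewrite vsub_cons, IHy; f_equal; lia. Qed.

Lemma vsub_inj y y' z : length y = length z -> length y' = length z ->
  vsub y z = vsub y' z -> y = y'.
Proof.
  revert y' z; induction y as [|a y IH]; intros [|b y'] [|c z] H1 H2 H3;
    simpl in H1, H2; try discriminate; auto.
  rewrite !vsub_cons in H3. injection H3; intros. f_equal; [lia|]. apply (IH y' z); auto.
Qed.

Lemma vsub_eq0 y c : length y = length c -> vsub y c = repeat 0%Z (length y) -> y = c.
Proof.
  revert c; induction y; intros [|b c] H E; simpl in H, E; try discriminate; auto.
  rewrite vsub_cons in E. injection E; intros. f_equal; [lia|]. apply IHy; auto.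
Qed.

(** * Cubes of side 2^n tiling V_(n+1) *)

Fixpoint lists_over (Rg : list Z) (d : nat) : list (list Z) :=
  match d with
  | O => [[]]
  | S d' => flat_map (fun a => map (cons a) (lists_over Rg d')) Rg
  end.

Lemma In_lists_over Rg d x :
  length x = d -> Forall (fun z => In z Rg) x -> In x (lists_over Rg d).
Proof.
  revert x; induction d; intros [|a x] H1 H2; simpl in H1; try discriminate; simpl; auto.
  inversion H2; subst. apply in_flat_map. exists a. split; auto. apply in_map, IHd; auto.
Qed.

Lemma length_lists_over Rg d : length (lists_over Rg d) = (length Rg ^ d)%nat.
Proof.
  assert (Hflat : forall L : list (list Z),
    length (flat_map (fun a => map (cons a) L) Rg) = (length Rg * length L)%nat).
  { intros L. induction Rg as [|a Rg IH]; simpl; auto. rewrite length_app, length_map, IH. lia. }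
  induction d; simpl; auto. rewrite Hflat, IHd. reflexivity.
Qed.

Lemma summable_box d n (f : list Z -> R) : (forall x, 0 <= f x) ->
  summable (fun x => box d n x /\ lattice d x) f.
Proof.
  intros Hf. set (P := (2 ^ Z.of_nat n)%Z).
  set (Rg := map (fun i => Z.of_nat i - P)%Z (seq 0 (Z.to_nat (2 * P)))).
  exists (lsum f (lists_over Rg d)). intros s [l [Hn [Hl ->]]].
  apply (lsum_incl _ (list_eq_dec Z.eq_dec)); auto. intros x Hx.
  rewrite Forall_forall in Hl. destruct (Hl x Hx) as [[Lx Bx] _].
  apply In_lists_over; auto. eapply Forall_impl; [|exact Bx]. intros z Hz.
  simpl in Hz. fold P in Hz. apply in_map_iff. exists (Z.to_nat (z + P)). rewrite in_seq. lia.
Qed.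

(* [quarter n a = i] iff a lies in the i-th interval [-2^(n+1) + i 2^n, -2^(n+1) + (i+1) 2^n). *)
Definition quarter (n : nat) (a : Z) : Z := ((a + 2 * 2 ^ Z.of_nat n) / 2 ^ Z.of_nat n)%Z.

Definition cell (n : nat) (y : list Z) : list Z := map (quarter n) y.

Lemma box_succ_bound n a :
  (- 2 ^ Z.of_nat (S n) <= a < 2 ^ Z.of_nat (S n))%Z <->
  (- (2 * 2 ^ Z.of_nat n) <= a < 2 * 2 ^ Z.of_nat n)%Z.
Proof. rewrite Nat2Z.inj_succ, Z.pow_succ_r by lia. reflexivity. Qed.

Lemma quarter_range n a : (- (2 * 2 ^ Z.of_nat n) <= a < 2 * 2 ^ Z.of_nat n)%Z ->
  In (quarter n a) [0; 1; 2; 3]%Z.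
Proof.
  intros Ha. unfold quarter. set (P := (2 ^ Z.of_nat n)%Z) in *.
  assert (HP : (0 < P)%Z) by (apply Z.pow_pos_nonneg; lia).
  assert (0 <= (a + 2 * P) / P)%Z by (apply Z.div_pos; lia).
  assert ((a + 2 * P) / P < 4)%Z by (apply Z.div_lt_upper_bound; lia).
  set (q := ((a + 2 * P) / P)%Z) in *. simpl. lia.
Qed.

Lemma quarter_eq_sub n a b :
  (- (2 * 2 ^ Z.of_nat n) <= a < 2 * 2 ^ Z.of_nat n)%Z ->
  (- (2 * 2 ^ Z.of_nat n) <= b < 2 * 2 ^ Z.of_nat n)%Z ->
  quarter n a = quarter n b -> (- 2 ^ Z.of_nat n <= a - b < 2 ^ Z.of_nat n)%Z.
Proof.
  unfold quarter. set (P := (2 ^ Z.of_nat n)%Z). intros Ha Hb E.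
  assert (HP : (0 < P)%Z) by (apply Z.pow_pos_nonneg; lia).
  pose proof (Z.div_mod (a + 2 * P) P ltac:(lia)) as Da.
  pose proof (Z.div_mod (b + 2 * P) P ltac:(lia)) as Db.
  pose proof (Z.mod_pos_bound (a + 2 * P) P HP).
  pose proof (Z.mod_pos_bound (b + 2 * P) P HP).
  rewrite E in Da. nia.
Qed.

Lemma cell_in_cells d n y : box d (S n) y -> In (cell n y) (lists_over [0; 1; 2; 3]%Z d).
Proof.
  intros [Ly By]. apply In_lists_over; [unfold cell; rewrite length_map; auto|].
  apply Forall_map. eapply Forall_impl; [|exact By]. intros a Ha.
  apply quarter_range, box_succ_bound, Ha.
Qed.

Lemma vsub_same_cell d n y z : box d (S n) y -> box d (S n) z ->
  cell n y = cell n z -> box d n (vsub y z).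
Proof.
  intros [Ly By] [Lz Bz] E. unfold lattice in *.
  split; [unfold lattice; rewrite vsub_length; congruence|].
  assert (Lyz : length y = length z) by congruence. clear Ly Lz.
  revert z Lyz Bz E; induction y as [|a y IH]; intros [|b z] Lyz Bz E;
    simpl in Lyz; try discriminate; [constructor|].
  inversion By; inversion Bz; subst. injection E; intros. rewrite vsub_cons. constructor.
  - apply quarter_eq_sub; auto; apply box_succ_bound; auto.
  - apply IH; auto.
Qed.

(** * Maximum principle for Green sums *)

Section MaximumPrinciple.
Variables (d : nat) (p : list Z -> R).
Hypothesis Hp : step_distribution d p.
Hypothesis Htr : transient d p.

Local Notation origin := (repeat 0%Z d).

Lemma p_nonneg u : 0 <= p u.
Proof. apply Hp. Qed.

Lemma lattice_vsub y a : lattice d y -> lattice d a -> lattice d (vsub y a).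
Proof. unfold lattice; intros; rewrite vsub_length; congruence. Qed.

Lemma lattice_vadd y a : lattice d y -> lattice d a -> lattice d (vadd y a).
Proof. unfold lattice; intros; rewrite vadd_length; congruence. Qed.

Lemma law_nonneg k a x : 0 <= law d p k a x.
Proof.
  revert x; induction k; intros x; simpl.
  - destruct (list_eq_dec Z.eq_dec x a); lra.
  - apply psum_nonneg. intros y. apply Rmult_le_pos; auto using p_nonneg.
Qed.

Lemma green_nonneg a x : 0 <= green d p a x.
Proof. apply psum_nonneg. intros; apply law_nonneg. Qed.

Lemma law_succ_last_step k a x : lattice d x ->
  law d p (S k) a x = psum (lattice d) (fun u => law d p k a (vsub x u) * p u).
Proof.
  intros Hx. simpl.
  rewrite (psum_reindex_invol (lattice d) _ (fun u => vsub x u)).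
  - apply psum_ext_in. intros u Hu. rewrite vsubK; auto. unfold lattice in *; congruence.
  - intros u Hu. now apply lattice_vsub.
  - intros u Hu. apply vsubK. unfold lattice in *; congruence.
Qed.

Lemma lsum_law_le_green N a x : lattice d a -> lattice d x ->
  lsum (fun k => law d p k a x) (seq 0 N) <= green d p a x.
Proof.
  intros Ha Hx. apply psum_ub; [now apply Htr | apply seq_NoDup | apply Forall_forall; auto].
Qed.

Lemma psum_scal_p_le M : 0 <= M ->
  summable (lattice d) (fun u => M * p u) /\ psum (lattice d) (fun u => M * p u) <= M.
Proof.
  intros HM. destruct Hp as [_ [_ [Hps Hp1]]].
  apply psum_le_of_bound. intros l Hn Hf. rewrite lsum_scal_l.
  pose proof (psum_ub _ p l Hps Hn Hf) as H. rewrite Hp1 in H.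
  apply Rmult_le_compat_l with (r := M) in H; auto. lra.
Qed.

(* law k origin (y - a) = P^a{X_k = y}: [visits N V a] is the expected number
   of visits to V before time N, starting from a. *)
Definition visits (N : nat) (V : list (list Z)) (a : list Z) : R :=
  lsum (fun y => lsum (fun k => law d p k origin (vsub y a)) (seq 0 N)) V.

Lemma visits_le_green N V a : Forall (lattice d) V -> lattice d a ->
  visits N V a <= lsum (fun y => green d p origin (vsub y a)) V.
Proof.
  intros HV Ha. rewrite Forall_forall in HV. apply lsum_le. intros y Hy.
  apply lsum_law_le_green; [apply repeat_length | apply lattice_vsub; auto].
Qed.

Lemma visits_succ_outside N V a : Forall (lattice d) V -> lattice d a -> ~ In a V ->
  visits (S N) V a = lsum (fun y => lsum (fun k => psum (lattice d)
    (fun u => law d p k origin (vsub y (vadd a u)) * p u)) (seq 0 N)) V.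
Proof.
  intros HV Ha Hnin. rewrite Forall_forall in HV. unfold visits.
  apply lsum_ext_in. intros y Hy.
  replace (seq 0 (S N)) with (0%nat :: map S (seq 0 N)) by (rewrite seq_shift; reflexivity).
  rewrite lsum_cons, lsum_map.
  replace (law d p 0 origin (vsub y a)) with 0.
  2:{ simpl. destruct (list_eq_dec Z.eq_dec (vsub y a) origin) as [e|]; auto.
      exfalso. apply Hnin. replace a with y; auto. apply vsub_eq0.
      - unfold lattice in *; rewrite HV, Ha; auto.
      - rewrite e, (HV y Hy). reflexivity. }
  rewrite Rplus_0_l. apply lsum_ext_in. intros k _.
  rewrite law_succ_last_step by (apply lattice_vsub; auto).
  apply psum_ext_in. intros u Hu.
  pose proof (HV y Hy). unfold lattice in *. rewrite vsub_vadd; congruence.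
Qed.

(* Off V, the first step averages visits over the neighbours a + u. *)
Lemma visits_succ_le N V a M : Forall (lattice d) V -> lattice d a -> ~ In a V -> 0 <= M ->
  (forall b, lattice d b -> visits N V b <= M) -> visits (S N) V a <= M.
Proof.
  intros HV Ha Hnin HM IH.
  set (F y u := lsum (fun k => law d p k origin (vsub y (vadd a u)) * p u) (seq 0 N)).
  assert (HF : forall y u, 0 <= F y u).
  { intros; apply lsum_nonneg; intros; apply Rmult_le_pos; auto using law_nonneg, p_nonneg. }
  assert (HFS : forall u, lsum (fun y => F y u) V <= M * p u).
  { intros u. unfold F. rewrite (lsum_ext_in _ (fun y => lsum (fun k =>
      law d p k origin (vsub y (vadd a u))) (seq 0 N) * p u)) by (intros; apply lsum_scal_r).
    rewrite lsum_scal_r. destruct (Req_dec (p u) 0) as [E|E]; [rewrite E; lra|].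
    apply Rmult_le_compat_r; [apply p_nonneg|]. apply IH, lattice_vadd; [exact Ha | apply Hp, E]. }
  destruct (psum_scal_p_le M HM) as [HsM HpM].
  assert (HsF : summable (lattice d) (fun u => lsum (fun y => F y u) V))
    by (apply summable_le with (2 := HsM); auto).
  rewrite visits_succ_outside by auto.
  apply Rle_trans with (lsum (fun y => psum (lattice d) (F y)) V).
  { apply lsum_le. intros y Hy.
    apply (lsum_psum_le (list_eq_dec Z.eq_dec) (lattice d)
             (fun k u => law d p k origin (vsub y (vadd a u)) * p u)).
    - intros; apply Rmult_le_pos; auto using law_nonneg, p_nonneg.
    - apply summable_le with (2 := HsF). intros u.
      apply (lsum_In_le (fun y => F y u) V y Hy). auto. }
  apply Rle_trans with (psum (lattice d) (fun u => lsum (fun y => F y u) V)).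
  { apply (lsum_psum_le (list_eq_dec Z.eq_dec) (lattice d) F); auto. }
  apply Rle_trans with (2 := HpM). apply psum_le; auto.
Qed.

Lemma visits_le N V a M : Forall (lattice d) V -> 0 <= M ->
  (forall z, In z V -> lsum (fun y => green d p origin (vsub y z)) V <= M) ->
  lattice d a -> visits N V a <= M.
Proof.
  intros HV HM Hz. revert a. induction N as [|N IH]; intros a Ha.
  - unfold visits. simpl. rewrite lsum_const; lra.
  - destruct (in_dec (list_eq_dec Z.eq_dec) a V) as [Hin|Hnin].
    + apply Rle_trans with (2 := Hz a Hin). apply visits_le_green; auto.
    + apply visits_succ_le; auto.
Qed.

Lemma lsum_green_le_of_visits V M : Forall (lattice d) V ->
  (forall N, visits N V origin <= M) -> lsum (green d p origin) V <= M.
Proof.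
  intros HV Hv. rewrite Forall_forall in HV.
  assert (B : summable (fun _ : nat => True) (fun n => lsum (law d p n origin) V) /\
              psum (fun _ => True) (fun n => lsum (law d p n origin) V) <= M).
  { apply psum_le_of_bound. intros L Hn _.
    apply Rle_trans with (lsum (fun n => lsum (law d p n origin) V) (seq 0 (S (list_max L)))).
    { apply (lsum_incl _ Nat.eq_dec); auto.
      - intros; apply lsum_nonneg; intros; apply law_nonneg.
      - intros k Hk. apply in_seq. split; [lia|].
        assert (Hf : Forall (fun k => (k <= list_max L)%nat) L) by (apply list_max_le; lia).
        rewrite Forall_forall in Hf. specialize (Hf k Hk). lia. }
    rewrite lsum_swap. apply Rle_trans with (2 := Hv (S (list_max L))). right.
    unfold visits. apply lsum_ext_in. intros y Hy.
    rewrite <- (HV y Hy), vsub0. reflexivity. }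
  destruct B as [Bs Bp]. apply Rle_trans with (2 := Bp). unfold green.
  apply (lsum_psum_le Nat.eq_dec (fun _ => True) (fun y n => law d p n origin y)); auto.
  intros; apply law_nonneg.
Qed.

Lemma lsum_green_le_max V M : Forall (lattice d) V -> 0 <= M ->
  (forall z, In z V -> lsum (fun y => green d p origin (vsub y z)) V <= M) ->
  lsum (green d p origin) V <= M.
Proof.
  intros HV HM Hz. apply lsum_green_le_of_visits; auto. intros N.
  apply visits_le; auto. apply repeat_length.
Qed.

Lemma lsum_green_le_U_of_vsub_box n V : NoDup V -> Forall (lattice d) V ->
  (forall y z, In y V -> In z V -> box d n (vsub y z)) ->
  lsum (green d p origin) V <= U d p (box d n).
Proof.
  intros Hn HV Hbox. rewrite Forall_forall in HV.
  apply lsum_green_le_max; [now apply Forall_forall | apply psum_nonneg, green_nonneg|].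
  intros z Hz. rewrite <- (lsum_map (green d p origin) (fun y => vsub y z)).
  assert (Lz := HV z Hz). unfold lattice in *.
  apply psum_ub; [apply summable_box, green_nonneg | |].
  - apply NoDup_map_NoDup_ForallPairs; auto. intros y y' Hy Hy'.
    apply vsub_inj; rewrite ?HV; auto.
  - apply Forall_forall. intros w Hw. apply in_map_iff in Hw. destruct Hw as [y [<- Hy]].
    pose proof (Hbox y z Hy Hz) as B. split; auto. apply B.
Qed.

End MaximumPrinciple.

Lemma In_filter_class {T U} (decU : forall x y : U, {x = y} + {x <> y}) (cls : T -> U) c l y :
  In y (filter (fun x => if decU (cls x) c then true else false) l) <-> In y l /\ cls y = c.
Proof.
  rewrite filter_In. destruct (decU (cls y) c); split; intros []; auto; discriminate.
Qed.

Theorem proposition6p2 (d : nat) (p : list Z -> R)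
  (Hp : step_distribution d p) (Htr : transient d p) :
  forall n : nat, U d p (box d (S n)) <= 4 ^ d * U d p (box d n).
Proof.
  intros n. unfold U at 1. apply psum_le_of_bound. intros l Hl Hbox.
  rewrite Forall_forall in Hbox.
  set (cells := lists_over [0; 1; 2; 3]%Z d).
  set (piece c := filter (fun y => if list_eq_dec Z.eq_dec (cell n y) c then true else false) l).
  apply Rle_trans with (lsum (fun c => lsum (green d p (repeat 0%Z d)) (piece c)) cells).
  { apply lsum_le_sum_classes; [intros; apply green_nonneg; apply Hp|].
    intros y Hy. apply cell_in_cells, Hbox, Hy. }
  apply Rle_trans with (lsum (fun _ => U d p (box d n)) cells).
  { apply lsum_le. intros c _. apply lsum_green_le_U_of_vsub_box; auto.
    - apply NoDup_filter, Hl.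
    - apply Forall_forall. intros y Hy%In_filter_class. apply Hbox, Hy.
    - intros y z [Hy Ey]%In_filter_class [Hz Ez]%In_filter_class.
      apply vsub_same_cell; [apply Hbox; auto | apply Hbox; auto | congruence]. }
  rewrite lsum_const. unfold cells. rewrite length_lists_over, pow_INR.
  replace (INR (length [0; 1; 2; 3]%Z)) with 4 by (simpl; lra). lra.
Qed.
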